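(* Let $G=(V,E)$ be a connected simple undirected graph with $V=\{1,\dots,n\}$, let $c\in\mathbb{R}^n$ be a vector with all components strictly positive, and let $\rho>0$. Then there exist strictly positive edge weights $w_{ij}>0$, $\{i,j\}\in E$, such that the weighted adjacency matrix $A$ satisfies $Ac=\rho\,c$ (i.e. $c$ is an eigenvector centrality vector of $G$ for some positive weighting) if and only if $$\sum_{j\in S}c_j^2=\sum_{j\in N(S)}c_j^2\quad\text{for every } S\in\mathcal{S}_1,$$ and $$\sum_{j\in S}c_j^2<\sum_{j\in N(S)}c_j^2\quad\text{for every } S\in\mathcal{S}_2.$$
   Context: For positive edge weights $w_{ij}=w_{ji}$ ($\{i,j\}\in E$), the weighted adjacency matrix $A\in\mathbb{R}^{n\times n}$ has $a_{ij}=w_{ij}$ if $\{i,j\}\in E$ and $a_{ij}=0$ otherwise. For $S\subseteq V$, the external neighborhood is $N(S)=\{j\in V\setminus S:\ \exists\, i\in S \text{ with } \{i,j\}\in E\}$. A set $S\subseteq V$ is stable if no two elements of $S$ are joined by an edge. $\mathcal{S}_1$ is the family of nonempty stable sets $S\subseteq V$ such that there is no edge $\{k,\ell\}\in E$ with $k\notin S$ and $\ell\notin S$; $\mathcal{S}_2$ is the family of nonempty stable sets $S\subseteq V$ such that there exists an edge $\{k,\ell\}\in E$ with $k\notin S$ and $\ell\notin S$. *)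

From HB Require Import structures.
From mathcomp Require Import all_boot all_order all_algebra.
From mathcomp Require Import reals.
Set Implicit Arguments. Unset Strict Implicit. Unset Printing Implicit Defensive.
Import Order.TTheory GRing.Theory Num.Theory.
Local Open Scope ring_scope.

Definition simple_graph (n : nat) (e : rel 'I_n) : Prop :=
  symmetric e /\ irreflexive e.

Definition connected_graph (n : nat) (e : rel 'I_n) : Prop :=
  forall i j : 'I_n, connect e i j.

Definition wadj (R : ringType) (n : nat) (e : rel 'I_n) (w : 'I_n -> 'I_n -> R)
  : 'M[R]_n := \matrix_(i, j) (if e i j then w i j else 0).

Definition ext_nbhd (n : nat) (e : rel 'I_n) (S : {set 'I_n}) : {set 'I_n} :=
  [set j | (j \notin S) && [exists i in S, e i j]].

Definition stable_set (n : nat) (e : rel 'I_n) (S : {set 'I_n}) : bool :=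
  [forall i in S, forall j in S, ~~ e i j].

Definition edge_outside (n : nat) (e : rel 'I_n) (S : {set 'I_n}) : bool :=
  [exists k, exists l, [&& e k l, k \notin S & l \notin S]].

Definition family_S1 (n : nat) (e : rel 'I_n) (S : {set 'I_n}) : bool :=
  [&& S != set0, stable_set e S & ~~ edge_outside e S].

Definition family_S2 (n : nat) (e : rel 'I_n) (S : {set 'I_n}) : bool :=
  [&& S != set0, stable_set e S & edge_outside e S].

From HB Require Import structures.
From mathcomp Require Import all_boot all_order all_algebra.
From mathcomp Require Import reals.
From mathcomp Require Import zify ring lra.
Set Implicit Arguments. Unset Strict Implicit. Unset Printing Implicit Defensive.
Import Order.TTheory GRing.Theory Num.Theory.
Local Open Scope ring_scope.

(* Substituting x_ij = w_ij c_i c_j / rho turns A c = rho c into the statement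
   that x is a positive symmetric edge weighting with vertex sums b_i = c_i^2.
   Necessity is double counting: for a stable set S all the weight at S lands in
   N(S), so b(N(S)) - b(S) is the weight on edges from N(S) to vertices outside
   S; it vanishes for S in S_1 and, by connectivity, is positive for S in S_2.
   For sufficiency, lower b by eps times the degree.  For small eps the result b'
   is nonnegative and satisfies b'(S) <= b'(N(S)) for every stable S (for S in
   S_1 the sets S and N(S) have the same total degree).  Applied to the stable set
   X \ N(X) this gives Hall's condition b'(X) <= b'(N(X)) for arbitrary X, so a
   fractional Hall theorem on the bipartite double cover yields a nonnegative z
   with row and column sums b'; then eps + (z + z^T)/2 on the edges works.  The
   Hall theorem is proved by induction: split at a proper tight set, or else push
   flow along a single edge until a vertex or a demand is exhausted or a tight
   set appears. *)

Section BigSums.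
Variables (R : numDomainType) (T : finType).
Implicit Types (A B : {set T}) (F : T -> R).

Lemma sum_setU_disjoint A B F : [disjoint A & B] ->
  \sum_(i in A :|: B) F i = \sum_(i in A) F i + \sum_(i in B) F i.
Proof. by move=> AB; rewrite -bigU //; apply: eq_bigl => i; rewrite inE. Qed.

Lemma sum_subset_le A B F : A \subset B -> {in B, forall i, 0 <= F i} ->
  \sum_(i in A) F i <= \sum_(i in B) F i.
Proof.
move=> AB F0; rewrite [leRHS](big_setID A) /= (setIidPr AB) lerDl.
by apply: sumr_ge0 => i /setDP[iB _]; exact: F0.
Qed.

Lemma sum_ge_term (P : pred T) F i0 : (forall i, P i -> 0 <= F i) -> P i0 ->
  F i0 <= \sum_(i | P i) F i.
Proof.
move=> F0 Pi0; rewrite (bigD1 i0) //= lerDl.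
by apply: sumr_ge0 => i /andP[Pi _]; exact: F0.
Qed.

Definition delta (u : T) (t : R) (i : T) : R := if i == u then t else 0.

Lemma sum_delta (P : pred T) u t : \sum_(i | P i) delta u t i = if P u then t else 0.
Proof.
rewrite /delta -big_mkcondr /=; case: ifP => Pu.
  by rewrite (big_pred1 u) // => i /=; case: eqP => [->|]; rewrite ?Pu ?andbF.
by rewrite big_pred0 // => i; case: eqP => [->|]; rewrite ?Pu ?andbF.
Qed.

Lemma sum_delta_full u t : \sum_i delta u t i = t.
Proof. by rewrite sum_delta. Qed.

Lemma delta_sum (I : finType) u (f : I -> R) i :
  \sum_j delta u (f j) i = delta u (\sum_j f j) i.
Proof. by rewrite /delta; case: (i == u) => //; rewrite big1. Qed.

Definition decr (f : T -> R) u t i := f i - delta u t i.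

Lemma sum_decr A f u t :
  \sum_(i in A) decr f u t i = \sum_(i in A) f i - if u \in A then t else 0.
Proof. by rewrite sumrB sum_delta. Qed.

Definition nonneg (f : T -> R) := forall i, 0 <= f i.

Lemma decr_ge0 f u t : nonneg f -> t <= f u -> nonneg (decr f u t).
Proof. by move=> f0 tu i; rewrite /decr /delta subr_ge0; case: eqP => [->|]. Qed.

End BigSums.

Section Minima.
Variables (R : realDomainType) (I : finType) (P : pred I) (f : I -> R).
Hypothesis f_pos : forall x, P x -> 0 < f x.

Lemma exists_pos_lower_bound : exists2 m, 0 < m & forall x, P x -> m <= f x.
Proof.
case: (pickP P) => [x0 Px0|noP]; last by exists 1 => // x; rewrite noP.
by case: (arg_minP f Px0) => x Px min_x; exists (f x); [exact: f_pos|].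
Qed.

Lemma exists_pos_min (alpha beta : R) : 0 < alpha -> 0 < beta ->
  exists t, [/\ 0 < t, t <= alpha, t <= beta, forall x, P x -> t <= f x &
    [\/ t = alpha, t = beta | exists2 x, P x & t = f x]].
Proof.
move=> alpha0 beta0.
pose g o := if o is Some x then f x else Num.min alpha beta.
pose Q o := if o is Some x then P x else true.
case: (@arg_minP _ _ _ None Q g isT) => o Qo min_o.
have /andP[le_alpha le_beta] : (g o <= alpha) && (g o <= beta).
  by rewrite -le_min; exact: (min_o None).
exists (g o); split=> //.
- by case: o Qo {min_o le_alpha le_beta} => [x /f_pos|_] //=; rewrite lt_min alpha0.
- by move=> x Px; exact: (min_o (Some x)).
case: o Qo {min_o le_alpha le_beta} => [x Px|_] /=; first by constructor 3; exists x.
by case: leP => _; [constructor 1|constructor 2].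
Qed.

End Minima.

Section Transport.
Variables (R : realDomainType) (T : finType) (e : rel T).
Implicit Types (L X Y : {set T}) (a d : T -> R) (z : T -> T -> R).

Definition nbhd X : {set T} := [set j | [exists i in X, e i j]].

Lemma nbhdP X j : reflect (exists2 i, i \in X & e i j) (j \in nbhd X).
Proof.
rewrite inE; apply: (iffP existsP) => [[i /andP[]]|[i iX eij]]; first by exists i.
by exists i; rewrite iX.
Qed.

Lemma nbhdU X Y : nbhd (X :|: Y) = nbhd X :|: nbhd Y.
Proof.
apply/setP => j; rewrite in_setU; apply/nbhdP/orP => [[i]|[]/nbhdP[i iX eij]].
- by rewrite inE => /orP[] iX eij; [left|right]; apply/nbhdP; exists i.
- by exists i; rewrite // inE iX.
- by exists i; rewrite // inE iX orbT.
Qed.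

Definition hall_condition L a d :=
  forall X, X \subset L -> \sum_(i in X) a i <= \sum_(j in nbhd X) d j.

(* Supplies a on L are shipped along the edges of e to demands d, i.e. z is a
   flow in the bipartite double cover of the graph. *)
Definition transport L a d z :=
  [/\ forall i j, 0 <= z i j,
      forall i j, z i j != 0 -> (i \in L) && e i j,
      {in L, forall i, \sum_j z i j = a i}
    & forall j, \sum_i z i j <= d j].

Definition transportable L a d := exists z, transport L a d z.

Lemma hall_condition_sub L L' a d :
  L' \subset L -> hall_condition L a d -> hall_condition L' a d.
Proof. by move=> sub h X XL'; apply: h; exact: subset_trans sub. Qed.

Lemma transport0 L a d : nonneg d -> {in L, forall i, a i = 0} ->
  transport L a d (fun _ _ => 0).
Proof. by move=> d0 a0; split=> [//|i j|i iL|j]; rewrite ?eqxx // big1 ?a0. Qed.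

Lemma transport_widen L L' a d z : L' \subset L ->
  (forall i, i \in L -> i \notin L' -> a i = 0) ->
  transport L' a d z -> transport L a d z.
Proof.
move=> sub a0 [z0 zs zr zc]; split=> // [i j /zs /andP[iL' ->]|i iL].
  by rewrite (subsetP sub).
have [/zr //|iL'] := boolP (i \in L').
rewrite a0 // big1 // => j _; apply/eqP/negPn/negP => /zs.
by rewrite (negbTE iL').
Qed.

Definition cut_demand X d j := if j \in nbhd X then 0 else d j.

Lemma sum_nbhdU X Y d : \sum_(j in nbhd (X :|: Y)) d j =
  \sum_(j in nbhd X) d j + \sum_(j in nbhd Y) cut_demand X d j.
Proof.
rewrite nbhdU !(big_mkcond (fun j => j \in _)) -big_split /=; apply: eq_bigr => j _.
by rewrite /cut_demand inE; do 2!case: (j \in _); rewrite /= ?addr0 ?add0r.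
Qed.

Lemma hall_condition_cut L X a d : X \subset L ->
  \sum_(i in X) a i = \sum_(j in nbhd X) d j ->
  hall_condition L a d -> hall_condition (L :\: X) a (cut_demand X d).
Proof.
move=> XL tightX h Y YLX.
have XY : [disjoint X & Y].
  by rewrite disjoint_sym disjoints_subset (subset_trans YLX) // setDE subsetIr.
have YL : Y \subset L by apply: subset_trans YLX (subsetDl L X).
have := h (X :|: Y); rewrite subUset XL YL sum_setU_disjoint // sum_nbhdU tightX.
by rewrite lerD2l; apply.
Qed.

Lemma transport_glue L X a d z1 z2 : X \subset L ->
  transport X a d z1 -> transport (L :\: X) a (cut_demand X d) z2 ->
  transport L a d (fun i j => z1 i j + z2 i j).
Proof.
move=> XL [z1_ge0 z1s z1r z1c] [z2_ge0 z2s z2r z2c].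
have z1X i j : i \notin X -> z1 i j = 0.
  by move=> iX; apply/eqP/negPn/negP => /z1s; rewrite (negbTE iX).
have z2X i j : i \in X -> z2 i j = 0.
  by move=> iX; apply/eqP/negPn/negP => /z2s; rewrite inE iX.
split=> [i j|i j|i iL|j].
- exact: addr_ge0.
- have [->|/z1s /andP[iX ->]] := eqVneq (z1 i j) 0; last by rewrite (subsetP XL).
  by rewrite add0r => /z2s; rewrite inE => /andP[/andP[_ ->] ->].
- rewrite big_split /=; have [iX|iX] := boolP (i \in X).
    by rewrite z1r // big1 ?addr0 // => j _; exact: z2X.
  by rewrite z2r ?inE ?iX ?iL // big1 ?add0r // => j _; exact: z1X.
- rewrite big_split /=; have := z2c j; rewrite /cut_demand; case: ifPn => [_|jX] z2cj.
    by rewrite -[d j]addr0 lerD.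
  rewrite big1 ?add0r // => i _; apply/eqP/negPn/negP => /z1s /andP[iX eij].
  by case/negP: jX; apply/nbhdP; exists i.
Qed.

Definition slack a d X := \sum_(j in nbhd X) d j - \sum_(i in X) a i.

Lemma hall_condition_push L a d u v t : e u v ->
  (forall X, X \subset L -> u \notin X -> v \in nbhd X -> t <= slack a d X) ->
  hall_condition L a d -> hall_condition L (decr a u t) (decr d v t).
Proof.
move=> euv small h X XL; rewrite !sum_decr; have := h X XL.
case: ifPn => uX.
  have -> : v \in nbhd X by apply/nbhdP; exists u.
  by rewrite lerD2r.
case: ifPn => vX; last by rewrite !subr0.
by have := small X XL uX vX; rewrite /slack subr0; lra.
Qed.

Lemma transport_push L a d z u v t : u \in L -> e u v -> 0 <= t ->
  transport L (decr a u t) (decr d v t) z ->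
  transport L a d (fun i j => z i j + delta u (delta v t j) i).
Proof.
move=> uL euv t0 [z0 zs zr zc]; split=> [i j|i j|i iL|j].
- by apply: addr_ge0 => //; rewrite /delta; case: (i == u); case: (j == v).
- rewrite /delta; have [->|_] := eqVneq i u; have [->|_] := eqVneq j v => /=;
    rewrite ?addr0; try exact: zs.
  by rewrite uL euv.
- by rewrite big_split /= zr // delta_sum sum_delta_full subrK.
- by rewrite big_split /= sum_delta_full -lerBrDr; exact: zc.
Qed.

Lemma transport_saturates a z : transport setT a a z ->
  forall j, \sum_i z i j = a j.
Proof.
case=> _ _ zr zc.
have total : \sum_j (a j - \sum_i z i j) = 0.
  by rewrite sumrB exchange_big /= (eq_bigr _ (fun i _ => zr i (in_setT i))) subrr.
move=> j; apply/eqP; rewrite eq_sym -subr_eq0; apply/eqP.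
by apply: (psumr_eq0P _ total) => // k _; rewrite subr_ge0.
Qed.

Definition demand_support d := [set j | 0 < d j].
Definition transport_size L d := (#|L| + #|demand_support d|)%N.

Lemma demand_support_decr d v t : 0 <= t ->
  demand_support (decr d v t) \subset demand_support d.
Proof.
move=> t0; apply/subsetP => j; rewrite !inE => /lt_le_trans; apply.
by rewrite gerBl /delta; case: eqP.
Qed.

Lemma hall_demand_neighbor L a d u : nonneg d -> hall_condition L a d ->
  u \in L -> 0 < a u -> exists2 v, e u v & 0 < d v.
Proof.
move=> d0 h uL au; have := h [set u]; rewrite sub1set uL big_set1 => /(_ isT) le_au.
case: (pickP [pred v | e u v && (0 < d v)]) => [v /andP[]|none]; first by exists v.
suff s0 : \sum_(j in nbhd [set u]) d j = 0 by move: le_au; rewrite s0 (lt_geF au).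
apply: big1 => j /nbhdP[i]; rewrite inE => /eqP-> euj.
by apply/eqP; rewrite eq_le d0 andbT leNgt; have := none j; rewrite /= euj /= => ->.
Qed.

Section Step.
Variable m : nat.
Hypothesis IH : forall L a d, (transport_size L d < m)%N ->
  nonneg a -> nonneg d -> hall_condition L a d -> transportable L a d.

Lemma transportable_tight L a d X : (transport_size L d <= m)%N ->
  nonneg a -> nonneg d -> hall_condition L a d ->
  X \subset L -> X != set0 -> X != L ->
  \sum_(i in X) a i = \sum_(j in nbhd X) d j -> transportable L a d.
Proof.
move=> size_m a0 d0 h XL X0 XL' tightX.
have ltXL : (#|X| < #|L|)%N by rewrite proper_card // properEneq XL' XL.
have X_gt0 : (0 < #|X|)%N by rewrite card_gt0.
have [z1 z1T] : transportable X a d.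
  apply: IH => //; last exact: hall_condition_sub h.
  by move: size_m; rewrite /transport_size; lia.
have [z2 z2T] : transportable (L :\: X) a (cut_demand X d).
  apply: IH => //; last exact: hall_condition_cut.
  - have : (#|demand_support (cut_demand X d)| <= #|demand_support d|)%N.
      apply/subset_leq_card/subsetP => j; rewrite !inE /cut_demand.
      by case: ifP; rewrite ?ltxx.
    by move: size_m; rewrite /transport_size cardsD (setIidPr XL); lia.
  - by move=> j; rewrite /cut_demand; case: ifP.
by eexists; exact: transport_glue XL z1T z2T.
Qed.

Lemma transportable_push L a d u : (transport_size L d <= m)%N ->
  nonneg a -> nonneg d -> hall_condition L a d ->
  (forall X, X \subset L -> X != set0 -> X != L ->
     \sum_(i in X) a i < \sum_(j in nbhd X) d j) ->
  u \in L -> 0 < a u -> transportable L a d.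
Proof.
move=> size_m a0 d0 h strict uL au.
have [v euv dv] := hall_demand_neighbor d0 h uL au.
pose P X := [&& X \subset L, u \notin X & v \in nbhd X].
have P_proper X : P X -> [/\ X \subset L, X != set0 & X != L].
  case/and3P=> XL uX /nbhdP[i iX _]; split=> //; first by apply/set0Pn; exists i.
  by apply: contraNneq uX => ->.
have P_slack X : P X -> 0 < slack a d X.
  by move=> /P_proper[XL X0 XL']; rewrite subr_gt0 strict.
have [t [t0 tau tdv t_slack t_eq]] := exists_pos_min P_slack au dv.
have a'0 := decr_ge0 a0 tau; have d'0 := decr_ge0 d0 tdv.
have h' : hall_condition L (decr a u t) (decr d v t).
  by apply: hall_condition_push => // X XL uX vX; apply: t_slack; rewrite /P XL uX.
have supp_le := subset_leq_card (demand_support_decr d v (ltW t0)).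
suff [z zT] : transportable L (decr a u t) (decr d v t).
  by eexists; exact: transport_push (ltW t0) zT.
case: t_eq => [ta|tb|[X PX tX]].
- have [z zT] : transportable (L :\ u) (decr a u t) (decr d v t).
    apply: IH => //; last exact: hall_condition_sub (subD1set L u) h'.
    by move: size_m supp_le; rewrite /transport_size (cardsD1 u L) uL; lia.
  exists z; apply: transport_widen zT; first exact: subD1set.
  move=> i iL; rewrite !inE iL andbT negbK => /eqP ->.
  by rewrite /decr /delta eqxx ta subrr.
- apply: IH => //; have : demand_support (decr d v t) \proper demand_support d.
    apply/properP; split; first exact: demand_support_decr (ltW t0).
    by exists v; rewrite !inE // /decr /delta eqxx tb subrr ltxx.
  by move/proper_card; move: size_m; rewrite /transport_size; lia.
- have [XL X0 XL'] := P_proper X PX; case/and3P: PX => _ uX vX.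
  apply: (transportable_tight _ a'0 d'0 h' XL X0 XL').
    by apply: leq_trans size_m; rewrite leq_add2l.
  by rewrite !sum_decr (negbTE uX) vX; move: tX; rewrite /slack; lra.
Qed.

Lemma transportable_step L a d : (transport_size L d <= m)%N ->
  nonneg a -> nonneg d -> hall_condition L a d -> transportable L a d.
Proof.
move=> size_m a0 d0 h.
have [|no_tight] := boolP [exists X : {set T}, [&& X \subset L, X != set0, X != L &
                                      \sum_(i in X) a i == \sum_(j in nbhd X) d j]].
  by case/existsP=> X /and4P[XL X0 XL' /eqP]; exact: transportable_tight.
case: (pickP [pred i | (i \in L) && (0 < a i)]) => [u /andP[uL au]|a_zero].
  apply: transportable_push uL au => // X XL X0 XL'.
  rewrite lt_neqAle h // andbT; apply: contraNneq no_tight => tightX.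
  by apply/existsP; exists X; rewrite XL X0 XL' tightX eqxx.
exists (fun _ _ => 0); apply: transport0 => // i iL.
by apply/eqP; rewrite eq_le a0 andbT leNgt; have := a_zero i; rewrite /= iL /= => ->.
Qed.

End Step.

Theorem transportable_of_hall L a d :
  nonneg a -> nonneg d -> hall_condition L a d -> transportable L a d.
Proof.
move: {2}(transport_size L d).+1 (ltnSn (transport_size L d)) => m.
elim: m L a d => // m IH L a d; exact: transportable_step.
Qed.

End Transport.

Section Graph.
Variables (n : nat) (e : rel 'I_n).
Implicit Types (S : {set 'I_n}).

Lemma ext_nbhdE S : ext_nbhd e S = nbhd e S :\: S.
Proof. by apply/setP => j; rewrite !inE. Qed.

Lemma ext_nbhd0 : ext_nbhd e set0 = set0.
Proof.
apply/eqP; rewrite -subset0; apply/subsetP => j.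
by rewrite ext_nbhdE => /setDP[/nbhdP[i]]; rewrite inE.
Qed.

Lemma stable_set_edge S i j : stable_set e S -> i \in S -> j \in S -> ~~ e i j.
Proof. by move=> /forall_inP/(_ i) stS iS jS; apply: (forall_inP (stS iS)). Qed.

Lemma path_edge_from_ext_nbhd S : symmetric e -> forall p k,
  k \notin S -> k \notin ext_nbhd e S -> path e k p -> last k p \in S ->
  exists j q, [/\ j \in ext_nbhd e S, q \notin S & e j q].
Proof.
move=> esym; elim=> [|x p IHp] k kS kN /=; first by rewrite (negbTE kS).
case/andP=> ekx px lx; have xS : x \notin S.
  apply: contra kN => xS; rewrite ext_nbhdE inE kS; apply/nbhdP; exists x => //.
  by rewrite esym.
have [xN|xN] := boolP (x \in ext_nbhd e S); last exact: IHp xS xN px lx.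
by exists x, k; rewrite esym.
Qed.

Lemma edge_from_ext_nbhd S : symmetric e -> connected_graph e ->
  S != set0 -> edge_outside e S ->
  exists j q, [/\ j \in ext_nbhd e S, q \notin S & e j q].
Proof.
move=> esym conn /set0Pn[s sS] /existsP[k /existsP[l /and3P[ekl kS lS]]].
have [kN|kN] := boolP (k \in ext_nbhd e S); first by exists k, l.
have /connectP[p ekp ks] := conn k s.
by apply: (path_edge_from_ext_nbhd esym kS kN ekp); rewrite -ks.
Qed.

End Graph.

Definition edge_weighting (R : nmodType) n (e : rel 'I_n)
    (x : 'I_n -> 'I_n -> R) (b : 'I_n -> R) :=
  [/\ forall i j, x i j = x j i, forall i j, ~~ e i j -> x i j = 0
    & forall i, \sum_j x i j = b i].

Section Necessity.
Variables (R : numDomainType) (n : nat) (e : rel 'I_n).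
Variables (x : 'I_n -> 'I_n -> R) (b : 'I_n -> R).
Hypothesis xw : edge_weighting e x b.
Implicit Types (S : {set 'I_n}).

Lemma sum_stable_weighting S : stable_set e S ->
  \sum_(i in S) b i + \sum_(j in ext_nbhd e S) \sum_(k | k \notin S) x j k
  = \sum_(j in ext_nbhd e S) b j.
Proof.
case: xw => xsym x0 xb stS.
have row_ext i : i \in S -> b i = \sum_(j in ext_nbhd e S) x i j.
  move=> iS; rewrite -xb (bigID (mem (ext_nbhd e S))) /= [X in _ + X]big1 ?addr0 //.
  move=> j jN; apply: x0; apply: contra jN => eij; rewrite inE; apply/andP; split.
    by apply: contraL eij => jS; exact: stable_set_edge stS iS jS.
  by apply/existsP; exists i; rewrite iS.
rewrite (eq_bigr _ row_ext) exchange_big /= -big_split /=; apply: eq_bigr => j _.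
by rewrite -xb [RHS](bigID (mem S)) /=; congr (_ + _); apply: eq_bigr => i _.
Qed.

Lemma family_S1_sum_eq S : family_S1 e S ->
  \sum_(i in S) b i = \sum_(j in ext_nbhd e S) b j.
Proof.
case/and3P=> _ stS no_out; rewrite -sum_stable_weighting // [X in _ + X]big1 ?addr0 //.
move=> j; rewrite ext_nbhdE => /setDP[_ jS]; apply: big1 => k kS.
case: xw => _ x0 _; apply: x0; apply: contra no_out => ejk.
by apply/existsP; exists j; apply/existsP; exists k; rewrite ejk jS.
Qed.

Lemma family_S2_sum_lt S : symmetric e -> connected_graph e ->
  (forall i j, e i j -> 0 < x i j) -> family_S2 e S ->
  \sum_(i in S) b i < \sum_(j in ext_nbhd e S) b j.
Proof.
move=> esym conn x_pos /and3P[S0 stS out].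
have x_ge0 i j : 0 <= x i j.
  by case: xw => _ x0 _; have [/x_pos/ltW|/x0->] := boolP (e i j).
have [j [k [jN kS ejk]]] := edge_from_ext_nbhd esym conn S0 out.
rewrite -sum_stable_weighting // ltrDl; apply: lt_le_trans (x_pos _ _ ejk) _.
apply: le_trans (sum_ge_term (P := fun k => k \notin S) _ kS) (sum_ge_term _ jN) => //.
by move=> i _; apply: sumr_ge0.
Qed.

End Necessity.

Definition stable_set_condition (R : numDomainType) n (e : rel 'I_n) (f : 'I_n -> R) :=
  forall S, stable_set e S -> \sum_(i in S) f i <= \sum_(j in ext_nbhd e S) f j.

Lemma hall_condition_of_stable (R : realDomainType) n (e : rel 'I_n) (b : 'I_n -> R) :
  symmetric e -> nonneg b -> stable_set_condition e b -> hall_condition e setT b b.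
Proof.
move=> esym b0 hS X _; pose S := X :\: nbhd e X.
have stS : stable_set e S.
  apply/forall_inP => i /setDP[iX _]; apply/forall_inP => j /setDP[_ jN].
  by apply: contra jN => eij; apply/nbhdP; exists i.
have ext_sub : ext_nbhd e S \subset nbhd e X :\: X.
  apply/subsetP => j; rewrite ext_nbhdE => /setDP[/nbhdP[i /setDP[iX iN] eij] _].
  rewrite inE andbC (_ : j \in nbhd e X); last by apply/nbhdP; exists i.
  by apply: contra iN => jX; apply/nbhdP; exists j; rewrite // esym.
rewrite (big_setID (nbhd e X)) [leRHS](big_setID X) /= setIC lerD2l.
by apply: le_trans (hS S stS) (sum_subset_le ext_sub _) => i _.
Qed.

Lemma edge_weighting_of_transport (R : realFieldType) n (e : rel 'I_n)
    (a : 'I_n -> R) z :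
  symmetric e -> transport e setT a a z ->
  edge_weighting e (fun i j => (z i j + z j i) / 2) a.
Proof.
move=> esym zT; have zcol := transport_saturates zT; case: zT => _ zs zr _.
have z0 i j : ~~ e i j -> z i j = 0.
  by move=> eij; apply/eqP/negPn/negP => /zs /andP[_]; apply/negP.
split=> [i j|i j eij|i]; first by rewrite addrC.
  by rewrite !z0 ?addr0 ?mul0r // esym.
by rewrite -mulr_suml big_split /= zr ?in_setT // zcol; lra.
Qed.

Lemma edge_weighting_lin (R : pzRingType) n (e : rel 'I_n) x1 x2 b1 b2 (k : R) :
  edge_weighting e x1 b1 -> edge_weighting e x2 b2 ->
  edge_weighting e (fun i j => k * x1 i j + x2 i j) (fun i => k * b1 i + b2 i).
Proof.
case=> s1 z1 r1 [s2 z2 r2]; split=> [i j|i j eij|i]; first by rewrite s1 s2.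
  by rewrite z1 ?z2 ?mulr0 ?addr0.
by rewrite big_split /= -mulr_sumr r1 r2.
Qed.

Definition degree (R : pzRingType) n (e : rel 'I_n) i : R := \sum_j (e i j)%:R.

Lemma edge_weighting_adj (R : pzRingType) n (e : rel 'I_n) : symmetric e ->
  edge_weighting e (fun i j => (e i j)%:R) (degree R e).
Proof. by move=> esym; split=> [i j|i j /negbTE->|i] //; rewrite esym. Qed.

Section Sufficiency.
Variables (R : realFieldType) (n : nat) (e : rel 'I_n) (b : 'I_n -> R).
Hypotheses (esym : symmetric e) (b_pos : forall i, 0 < b i).
Hypothesis S1_eq : forall S, family_S1 e S ->
  \sum_(i in S) b i = \sum_(j in ext_nbhd e S) b j.
Hypothesis S2_lt : forall S, family_S2 e S ->
  \sum_(i in S) b i < \sum_(j in ext_nbhd e S) b j.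

Let deg := degree R e.
Let deg_ge0 i : 0 <= deg i. Proof. by apply: sumr_ge0 => j _; exact: ler0n. Qed.
Let total_deg := \sum_(i in [set: 'I_n]) deg i.

Lemma stable_set_condition_perturbed (eps : R) : 0 <= eps ->
  (forall S, family_S2 e S ->
     eps * total_deg <= \sum_(j in ext_nbhd e S) b j - \sum_(i in S) b i) ->
  stable_set_condition e (fun i => b i - eps * deg i).
Proof.
move=> eps0 small S stS; rewrite !sumrB -!mulr_sumr.
have [->|S0] := eqVneq S set0; first by rewrite ext_nbhd0 !big_set0.
have [out|no_out] := boolP (edge_outside e S).
  have S2 : family_S2 e S by rewrite /family_S2 S0 stS out.
  have := small S S2; have : eps * \sum_(j in ext_nbhd e S) deg j <= eps * total_deg.
    by rewrite ler_wpM2l // sum_subset_le ?subsetT.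
  have : 0 <= eps * \sum_(i in S) deg i by rewrite mulr_ge0 ?sumr_ge0.
  lra.
have S1 : family_S1 e S by rewrite /family_S1 S0 stS no_out.
by rewrite S1_eq // (family_S1_sum_eq (edge_weighting_adj R esym) S1).
Qed.

Lemma exists_stable_perturbation : exists2 eps : R, 0 < eps &
  nonneg (fun i => b i - eps * deg i) /\
  stable_set_condition e (fun i => b i - eps * deg i).
Proof.
have [m1 m1_pos m1_le] := @exists_pos_lower_bound _ _ predT b (fun i _ => b_pos i).
have [m2 m2_pos m2_le] := @exists_pos_lower_bound _ _ (family_S2 e)
  (fun S => \sum_(j in ext_nbhd e S) b j - \sum_(i in S) b i)
  (fun S S2 => ltac:(by rewrite subr_gt0 S2_lt)).
have total0 : 0 <= total_deg by exact: sumr_ge0.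
pose eps := Num.min m1 m2 / (total_deg + 1).
have eps_pos : 0 < eps by rewrite divr_gt0 ?lt_min ?m1_pos // ltr_wpDl.
have eps_total : eps * total_deg <= Num.min m1 m2.
  rewrite /eps mulrAC ler_pdivrMr ?ltr_wpDl // ler_wpM2l ?lerDl //.
  by rewrite le_min (ltW m1_pos) ltW.
have [min_m1 min_m2] : Num.min m1 m2 <= m1 /\ Num.min m1 m2 <= m2.
  by split; rewrite ge_min lexx ?orbT.
exists eps => //; split.
  move=> i; rewrite subr_ge0; apply: le_trans (m1_le i isT).
  apply: le_trans min_m1; apply: le_trans eps_total; apply: ler_wpM2l; first exact: ltW.
  by have := sum_subset_le (subsetT [set i]) (fun j _ => deg_ge0 j); rewrite big_set1.
apply: stable_set_condition_perturbed (ltW eps_pos) _ => S S2.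
exact: le_trans eps_total (le_trans min_m2 (m2_le S S2)).
Qed.

Lemma exists_positive_weighting :
  exists x, edge_weighting e x b /\ forall i j, e i j -> 0 < x i j.
Proof.
have [eps eps_pos [b'_ge0 b'_stable]] := exists_stable_perturbation.
have [z zT] := transportable_of_hall b'_ge0 b'_ge0
  (hall_condition_of_stable esym b'_ge0 b'_stable).
have z_ge0 : forall i j, 0 <= z i j by case: zT.
exists (fun i j => eps * (e i j)%:R + (z i j + z j i) / 2); split.
  have [xsym x0 xr] := edge_weighting_lin eps (edge_weighting_adj R esym)
    (edge_weighting_of_transport esym zT).
  by split=> // i; rewrite xr addrC subrK.
by move=> i j eij; rewrite eij mulr1; have := z_ge0 i j; have := z_ge0 j i; lra.
Qed.

End Sufficiency.

Theorem positive_edge_weighting_iff (R : realFieldType) n (e : rel 'I_n)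
    (b : 'I_n -> R) :
  symmetric e -> connected_graph e -> (forall i, 0 < b i) ->
  (exists x, edge_weighting e x b /\ forall i j, e i j -> 0 < x i j) <->
  (forall S, family_S1 e S -> \sum_(i in S) b i = \sum_(j in ext_nbhd e S) b j) /\
  (forall S, family_S2 e S -> \sum_(i in S) b i < \sum_(j in ext_nbhd e S) b j).
Proof.
move=> esym conn b_pos; split=> [[x [xw x_pos]]|[S1_eq S2_lt]].
  split=> S; first exact: (family_S1_sum_eq xw).
  exact: (family_S2_sum_lt xw esym conn x_pos).
exact: exists_positive_weighting.
Qed.

Lemma wadj_eigenvectorP (R : nzRingType) n (e : rel 'I_n) w (c : 'cV[R]_n) rho :
  wadj e w *m c = rho *: c <->
  forall i, \sum_j (if e i j then w i j else 0) * c j ord0 = rho * c i ord0.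
Proof.
split=> [Hw i|Hw].
  have := congr1 (fun M : 'M[R]_(n, 1) => M i ord0) Hw.
  by rewrite !mxE; under eq_bigr do rewrite mxE.
by apply/matrixP => i k; rewrite (ord1 k) !mxE -Hw; apply: eq_bigr => j _; rewrite mxE.
Qed.

Lemma eigenvector_edge_weighting_iff (R : realFieldType) n (e : rel 'I_n)
    (c : 'cV[R]_n) (rho : R) :
  symmetric e -> (forall i, 0 < c i ord0) -> 0 < rho ->
  (exists w : 'I_n -> 'I_n -> R, (forall i j, e i j -> w i j = w j i) /\
     (forall i j, e i j -> 0 < w i j) /\ wadj e w *m c = rho *: c) <->
  (exists x, edge_weighting e x (fun i => c i ord0 ^+ 2) /\
     forall i j, e i j -> 0 < x i j).
Proof.
move=> esym c_pos rho_pos; have c_neq0 i : c i ord0 != 0 by rewrite gt_eqF.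
have rho_neq0 : rho != 0 by rewrite gt_eqF.
split=> [[w [wsym [w_pos /wadj_eigenvectorP Hw]]]|[x [[xsym x0 xr] x_pos]]].
  exists (fun i j => if e i j then w i j * c i ord0 * c j ord0 / rho else 0).
  split; first split.
  - move=> i j; rewrite esym; case: ifP => // eji.
    by rewrite (wsym _ _ eji) [w i j * c j ord0 * _]mulrAC.
  - by move=> i j /negbTE->.
  - move=> i; transitivity (c i ord0 / rho * \sum_j (if e i j then w i j else 0) * c j ord0).
      rewrite mulr_sumr; apply: eq_bigr => j _.
      by case: ifP => _; [field | rewrite !mul0r mulr0].
    by rewrite Hw; field.
  - by move=> i j eij; rewrite eij ?divr_gt0 ?mulr_gt0 ?w_pos ?c_pos.
exists (fun i j => rho * x i j / (c i ord0 * c j ord0)).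
split; [|split]=> [i j _|i j eij|]; first by rewrite xsym [c j _ * _]mulrC.
  by rewrite ?divr_gt0 ?mulr_gt0 ?x_pos ?c_pos.
apply/wadj_eigenvectorP => i.
have ci := c_neq0 i; transitivity (rho / c i ord0 * \sum_j x i j).
  rewrite mulr_sumr; apply: eq_bigr => j _; have cj := c_neq0 j.
  case: ifPn => [_|/x0->]; last by rewrite !(mul0r, mulr0).
  by field; rewrite ci cj.
by rewrite xr; field.
Qed.

Unset Implicit Arguments.
Theorem theorem1 (R : realType) (n : nat) (e : rel 'I_n)
  (Hsimple : simple_graph e) (Hconn : connected_graph e)
  (c : 'cV[R]_n) (Hc : forall i, 0 < c i ord0) (rho : R) (Hrho : 0 < rho) :
  (exists w : 'I_n -> 'I_n -> R,
      (forall i j, e i j -> w i j = w j i) /\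
      (forall i j, e i j -> 0 < w i j) /\
      wadj e w *m c = rho *: c)
  <->
  ((forall S : {set 'I_n}, family_S1 e S ->
      \sum_(j in S) c j ord0 ^+ 2 = \sum_(j in ext_nbhd e S) c j ord0 ^+ 2) /\
   (forall S : {set 'I_n}, family_S2 e S ->
      \sum_(j in S) c j ord0 ^+ 2 < \sum_(j in ext_nbhd e S) c j ord0 ^+ 2)).
Proof.
have [esym _] := Hsimple.
apply: iff_trans (eigenvector_edge_weighting_iff esym Hc Hrho) _.
by apply: positive_edge_weighting_iff => // i; exact: exprn_gt0.
Qed.
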